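(* For all integers $i,j,\ell$, $$\mathcal P_i(s)\mathcal P_{\ell+j}(s)-\mathcal P_j(s)\mathcal P_{\ell+i}(s)=(s^2-s+1)^{3j}\mathcal P_{i-j}(s)\mathcal P_\ell(s)$$ and $$\mathcal P_i(s)\mathcal Q_{\ell+j}(s)-\mathcal P_j(s)\mathcal Q_{\ell+i}(s)=(s^2-s+1)^{3j}\mathcal P_{i-j}(s)\mathcal Q_\ell(s).$$
   Context: Let $\mathbb F$ be a field of characteristic different from $3$ containing a primitive cube root of unity $\zeta_3$. For $i\in\mathbb Z$ define the rational functions in $\mathbb F(s)$ $$\mathcal P_i(s)=\frac{(s+\zeta_3)^{3i}-(s+\zeta_3^2)^{3i}}{3(\zeta_3-\zeta_3^2)s(s-1)},\qquad \mathcal Q_i(s)=\frac{\frac{1-\zeta_3}{3}(s+\zeta_3)^{3i-1}+\frac{1-\zeta_3^2}{3}(s+\zeta_3^2)^{3i-1}}{s-1}.$$ *)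

From HB Require Import structures.
From mathcomp Require Import all_boot all_order all_algebra.
Set Implicit Arguments. Unset Strict Implicit. Unset Printing Implicit Defensive.
Import Order.TTheory GRing.Theory Num.Theory.
Local Open Scope ring_scope.

Notation ratfun F := {fraction {poly F}}.

Definition svar (F : fieldType) : ratfun F := tofrac 'X.

Definition cst (F : fieldType) (a : F) : ratfun F := tofrac a%:P.

Definition Pfun (F : fieldType) (z : F) (i : int) : ratfun F :=
  let s := svar F in
  ((s + cst z) ^ (3 * i) - (s + cst (z ^+ 2)) ^ (3 * i))
  / (3%:R * (cst z - cst (z ^+ 2)) * s * (s - 1)).

Definition Qfun (F : fieldType) (z : F) (i : int) : ratfun F :=
  let s := svar F in
  (cst ((1 - z) / 3%:R) * (s + cst z) ^ (3 * i - 1)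
   + cst ((1 - z ^+ 2) / 3%:R) * (s + cst (z ^+ 2)) ^ (3 * i - 1))
  / (s - 1).

From HB Require Import structures.
From mathcomp Require Import all_boot all_order all_algebra.
From mathcomp Require Import ring.
Set Implicit Arguments. Unset Strict Implicit. Unset Printing Implicit Defensive.
Import Order.TTheory GRing.Theory Num.Theory.
Local Open Scope ring_scope.

(* With A = (s + z)^3 and B = (s + z^2)^3, both P_k and Q_k are, up to a
   factor independent of k, Binet-type sequences x A^k + y B^k, and
   (s + z)(s + z^2) = s^2 - s + 1 turns (s^2 - s + 1)^(3j) into (AB)^j.  Both
   identities are then instances of the generalised d'Ocagne identity
   U_i V_(l+j) - U_j V_(l+i) = (AB)^j U_(i-j) V_l, where U_k = A^k - B^k and
   V_k = x A^k + y B^k is arbitrary; it is checked by expanding both sides. *)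

Definition binet (K : unitRingType) (x y A B : K) (k : int) : K :=
  x * A ^ k + y * B ^ k.

Section Docagne.

Variables (K : fieldType) (A B : K).
Hypotheses (A_neq0 : A != 0) (B_neq0 : B != 0).

Lemma binet_docagne (x y : K) (i j l : int) :
  binet 1 (-1) A B i * binet x y A B (l + j)
    - binet 1 (-1) A B j * binet x y A B (l + i)
  = (A * B) ^ j * binet 1 (-1) A B (i - j) * binet x y A B l.
Proof.
have [uA uB] : A \is a GRing.unit /\ B \is a GRing.unit by rewrite !unitfE.
rewrite /binet exprzMl // !exprzDr // -!invr_expz.
have := expfz_neq0 j A_neq0; have := expfz_neq0 j B_neq0.
move: (A ^ i) (A ^ j) (A ^ l) (B ^ i) (B ^ j) (B ^ l).
by move=> ai aj al bi bj bl bj_neq0 aj_neq0; field; rewrite aj_neq0 bj_neq0.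
Qed.

Lemma binet_docagne_div (x y D E : K) (i j l : int) :
  binet 1 (-1) A B i / D * (binet x y A B (l + j) / E)
    - binet 1 (-1) A B j / D * (binet x y A B (l + i) / E)
  = (A * B) ^ j * (binet 1 (-1) A B (i - j) / D) * (binet x y A B l / E).
Proof.
transitivity ((binet 1 (-1) A B i * binet x y A B (l + j)
  - binet 1 (-1) A B j * binet x y A B (l + i)) / D / E); first by ring.
by rewrite binet_docagne; ring.
Qed.

End Docagne.

Lemma prim_root3_sum (R : idomainType) (z : R) :
  3.-primitive_root z -> z ^+ 2 + z + 1 = 0.
Proof.
move=> hz; have z_neq1 : z != 1 by rewrite -[z]expr1 -(prim_order_dvd hz).
have : (z - 1) * (z ^+ 2 + z + 1) == 0.
  have -> : (z - 1) * (z ^+ 2 + z + 1) = z ^+ 3 - 1 by ring.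
  by rewrite prim_expr_order // subrr.
by rewrite mulf_eq0 subr_eq0 (negbTE z_neq1) => /eqP.
Qed.

Section CubeRootRationalFunctions.

Variables (F : fieldType) (z : F).

Local Notation s := (svar F).

Lemma svar_addC_neq0 (c : F) : s + cst c != 0.
Proof. by rewrite /svar /cst -tofracD tofrac_eq0 monic_neq0 ?monicXaddC. Qed.

Lemma Pfun_binet (k : int) :
  Pfun z k = binet 1 (-1) ((s + cst z) ^+ 3) ((s + cst (z ^+ 2)) ^+ 3) k
             / (3%:R * (cst z - cst (z ^+ 2)) * s * (s - 1)).
Proof. by rewrite /Pfun /binet -!exprz_exp mul1r mulN1r. Qed.

Lemma Qfun_binet (k : int) :
  Qfun z k = binet (cst ((1 - z) / 3%:R) / (s + cst z))
                   (cst ((1 - z ^+ 2) / 3%:R) / (s + cst (z ^+ 2)))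
                   ((s + cst z) ^+ 3) ((s + cst (z ^+ 2)) ^+ 3) k / (s - 1).
Proof.
rewrite /Qfun /binet !exprzDr ?unitfE ?svar_addC_neq0 // !exprN1 -!exprz_exp.
by rewrite -!mulrA [_^-1 * _]mulrC [(s + cst (z ^+ 2))^-1 * _]mulrC.
Qed.

Hypothesis hz : 3.-primitive_root z.

Lemma svar_add_prim_root3_mul :
  (s + cst z) * (s + cst (z ^+ 2)) = s ^+ 2 - s + 1.
Proof.
have cst_sum : cst z + cst (z ^+ 2) = -1.
  rewrite /cst -!rmorphD.
  have -> : z + z ^+ 2 = -1 by rewrite -[-1]add0r -(prim_root3_sum hz); ring.
  by rewrite !rmorphN1.
have cst_prod : cst z * cst (z ^+ 2) = 1.
  by rewrite /cst -!rmorphM -exprS prim_expr_order // !rmorph1.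
transitivity (s ^+ 2 + (cst z + cst (z ^+ 2)) * s + cst z * cst (z ^+ 2)).
  by ring.
by rewrite cst_sum cst_prod; ring.
Qed.

Lemma svar_quadratic_expz (j : int) :
  (s ^+ 2 - s + 1) ^ (3 * j)
  = ((s + cst z) ^+ 3 * (s + cst (z ^+ 2)) ^+ 3) ^ j.
Proof. by rewrite -svar_add_prim_root3_mul -exprz_exp -exprMn. Qed.

End CubeRootRationalFunctions.

Theorem lemma3p4 (F : fieldType) (z : F)
  (hchar : 3%N \notin [pchar F]) (hz : 3.-primitive_root z)
  (i j l : int) :
  let s := svar F in
  Pfun z i * Pfun z (l + j) - Pfun z j * Pfun z (l + i)
    = (s ^+ 2 - s + 1) ^ (3 * j) * Pfun z (i - j) * Pfun z l
  /\
  Pfun z i * Qfun z (l + j) - Pfun z j * Qfun z (l + i)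
    = (s ^+ 2 - s + 1) ^ (3 * j) * Pfun z (i - j) * Qfun z l.
Proof.
(* [hchar] is unused: it follows from [hz], as X^3 - 1 = (X - 1)^3 in
   characteristic 3. *)
move=> s; rewrite {}/s !Pfun_binet !Qfun_binet (svar_quadratic_expz hz).
have A_neq0 := expf_neq0 3 (svar_addC_neq0 z).
have B_neq0 := expf_neq0 3 (svar_addC_neq0 (z ^+ 2)).
(* Fixing [K] spares unification a costly search through the fraction field. *)
split; exact: (binet_docagne_div (K := ratfun F) A_neq0 B_neq0).
Qed.
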